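(* In System $\mathsf{F_{<:}^{K\top}}$, for every term-in-context $\Theta\vdash t$ and type $\Theta\vdash T$: $\Theta\vdash t:T$ if and only if there is a type $S$ with $\Theta\vdash_M t:S$ and $\Theta\vdash S<:T$.
   Context: System $\mathsf{F_{<:}^{K\top}}$: raw types $T ::= \top \mid X \mid T\to T \mid \forall^{\mathsf K}(X<:T).T \mid \forall^\top(X<:T).T$, up to $\alpha$-conversion. Contexts $\Theta$: finite sequences of $X<:T$ or $x:T$ with distinct variables, each type well-formed over the preceding part. Subtyping $\Theta\vdash S<:T$: (Var) $\Theta,X<:T,\Theta'\vdash X<:T$; (Top) $T<:\top$; (Refl); (Trans); ($\to$) from $S'<:S$, $T<:T'$ infer $S\to T<:S'\to T'$; ($\forall$-Fun) from $\Theta,X<:S\vdash T<:T'$ infer $\Theta\vdash\forall^{\mathsf K}(X<:S).T<:\forall^{\mathsf K}(X<:S).T'$; ($\forall$-Loc) from $\Theta\vdash T_0<:S_0$, $\Theta,X<:S_0\vdash S_1<:T_1$ infer $\Theta\vdash\forall^{\mathsf K}(X<:S_0).S_1<:\forall^\top(X<:T_0).T_1$; ($\forall$-Top) from $\Theta\vdash T_0<:S_0$, $\Theta,X<:\top\vdash S_1<:T_1$ infer $\Theta\vdash\forall^\top(X<:S_0).S_1<:\forall^\top(X<:T_0).T_1$. Raw terms $t ::= \mathsf{top}\mid x\mid\lambda(x:T).t\mid\Lambda(X<:T).t\mid t\,t\mid t\{T\}$. Typing $\Theta\vdash t:T$: $\Theta\vdash\mathsf{top}:\top$; $\Theta,x:T,\Theta'\vdash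 x:T$; (sub) from $t:T$, $T<:T'$ infer $t:T'$; from $\Theta,x:S\vdash t:T$ infer $\Theta\vdash\lambda(x:S).t:S\to T$; from $t:S\to T$, $s:S$ infer $t\,s:T$; from $\Theta,X<:S\vdash t:T$ infer $\Theta\vdash\Lambda(X<:S).t:\forall^{\mathsf K}(X<:S).T$; from $\Theta\vdash t:\forall^\top(X<:S).T$ and $\Theta\vdash S'<:S$ infer $\Theta\vdash t\{S'\}:T[S'/X]$. $\Theta^*(T)=\Theta^*(S)$ if $T\equiv X$ and $X<:S$ occurs in $\Theta$; $\Theta^*(T)=T$ otherwise. Minimal typing $\Theta\vdash_M t:T$: $\Theta,x:T,\Theta'\vdash_M x:T$; $\Theta\vdash_M\mathsf{top}:\top$; from $\Theta,x:S\vdash_M t:T$ infer $\Theta\vdash_M\lambda(x:S).t:S\to T$; from $\Theta\vdash_M r:R$, $\Theta\vdash_M s:S$, $\Theta\vdash S<:S'$ with $\Theta^*(R)=S'\to T$ infer $\Theta\vdash_M r\,s:T$; from $\Theta,X<:S\vdash_M t:T$ infer $\Theta\vdash_M\Lambda(X<:S).t:\forall^{\mathsf K}(X<:S).T$; from $\Theta\vdash_M r:R$ and $\Theta\vdash S<:S'$ with $\Theta^*(R)=\forall^{\mathsf K}(X<:S').T$ or $\Theta^*(R)=\forall^\top(X<:S').T$ infer $\Theta\vdash_M r\{S\}:T[S/X]$. *)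

(* System F_{<:}^{K,T} with de Bruijn indices (a single index
   space shared by type and term variables, as in TAPL's F_{<:} implementation).
   alpha-conversion is thereby built in. Index 0 = most recently bound. *)
From Stdlib Require Import Arith List.
Import ListNotations.

Inductive typ : Type :=
| TTop : typ
| TVar : nat -> typ
| TArr : typ -> typ -> typ
| TAllK : typ -> typ -> typ   (* forall^K (X <: S). T ; T under one binder *)
| TAllT : typ -> typ -> typ.

Inductive term : Type :=
| ttop : term
| tvar : nat -> term
| tabs : typ -> term -> term
| ttabs : typ -> term -> term
| tapp : term -> term -> term
| ttapp : term -> typ -> term.

Inductive binding : Type :=
| BSub : typ -> binding
| BTyp : typ -> binding.

(* Head of the list = most recent binding. The type stored in the binding at
   position n lives in the context (skipn (S n) G). *)
Definition ctx := list binding.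

Fixpoint tshift (d c : nat) (T : typ) : typ :=
  match T with
  | TTop => TTop
  | TVar n => if c <=? n then TVar (n + d) else TVar n
  | TArr A B => TArr (tshift d c A) (tshift d c B)
  | TAllK A B => TAllK (tshift d c A) (tshift d (S c) B)
  | TAllT A B => TAllT (tshift d c A) (tshift d (S c) B)
  end.

Fixpoint tunshift (c : nat) (T : typ) : typ :=
  match T with
  | TTop => TTop
  | TVar n => if c <? n then TVar (n - 1) else TVar n
  | TArr A B => TArr (tunshift c A) (tunshift c B)
  | TAllK A B => TAllK (tunshift c A) (tunshift (S c) B)
  | TAllT A B => TAllT (tunshift c A) (tunshift (S c) B)
  end.

Fixpoint tsubst (j : nat) (s : typ) (T : typ) : typ :=
  match T with
  | TTop => TTop
  | TVar n => if n =? j then s else TVar n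
  | TArr A B => TArr (tsubst j s A) (tsubst j s B)
  | TAllK A B => TAllK (tsubst j s A) (tsubst (S j) (tshift 1 0 s) B)
  | TAllT A B => TAllT (tsubst j s A) (tsubst (S j) (tshift 1 0 s) B)
  end.

(* T[S/X] where T is the body of a binder (X = index 0) *)
Definition topen (T S : typ) : typ := tunshift 0 (tsubst 0 (tshift 1 0 S) T).

Inductive wf_typ : ctx -> typ -> Prop :=
| wft_top : forall G, wf_typ G TTop
| wft_var : forall G n U, nth_error G n = Some (BSub U) -> wf_typ G (TVar n)
| wft_arr : forall G A B, wf_typ G A -> wf_typ G B -> wf_typ G (TArr A B)
| wft_allK : forall G A B, wf_typ G A -> wf_typ (BSub A :: G) B -> wf_typ G (TAllK A B)
| wft_allT : forall G A B, wf_typ G A -> wf_typ (BSub A :: G) B -> wf_typ G (TAllT A B).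

Inductive wf_ctx : ctx -> Prop :=
| wfc_nil : wf_ctx []
| wfc_sub : forall G T, wf_ctx G -> wf_typ G T -> wf_ctx (BSub T :: G)
| wfc_typ : forall G T, wf_ctx G -> wf_typ G T -> wf_ctx (BTyp T :: G).

Inductive wf_term : ctx -> term -> Prop :=
| wfe_top : forall G, wf_term G ttop
| wfe_var : forall G n U, nth_error G n = Some (BTyp U) -> wf_term G (tvar n)
| wfe_abs : forall G S t, wf_typ G S -> wf_term (BTyp S :: G) t -> wf_term G (tabs S t)
| wfe_tabs : forall G S t, wf_typ G S -> wf_term (BSub S :: G) t -> wf_term G (ttabs S t)
| wfe_app : forall G r s, wf_term G r -> wf_term G s -> wf_term G (tapp r s)
| wfe_tapp : forall G t S, wf_term G t -> wf_typ G S -> wf_term G (ttapp t S).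

Inductive sub : ctx -> typ -> typ -> Prop :=
| S_Var : forall G n U, nth_error G n = Some (BSub U) ->
    sub G (TVar n) (tshift (S n) 0 U)
| S_Top : forall G T, sub G T TTop
| S_Refl : forall G T, sub G T T
| S_Trans : forall G S U T, sub G S U -> sub G U T -> sub G S T
| S_Arr : forall G S S' T T', sub G S' S -> sub G T T' -> sub G (TArr S T) (TArr S' T')
| S_AllFun : forall G S T T', sub (BSub S :: G) T T' -> sub G (TAllK S T) (TAllK S T')
| S_AllLoc : forall G S0 S1 T0 T1, sub G T0 S0 -> sub (BSub S0 :: G) S1 T1 ->
    sub G (TAllK S0 S1) (TAllT T0 T1)
| S_AllTop : forall G S0 S1 T0 T1, sub G T0 S0 -> sub (BSub TTop :: G) S1 T1 ->
    sub G (TAllT S0 S1) (TAllT T0 T1).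

(* Typing. In the lambda rule, the body type T of the conclusion lives in G;
   in the premise (context extended by x:S) it appears shifted by one. *)
Inductive typing : ctx -> term -> typ -> Prop :=
| T_Top : forall G, typing G ttop TTop
| T_Var : forall G n U, nth_error G n = Some (BTyp U) -> typing G (tvar n) (tshift (S n) 0 U)
| T_Sub : forall G t T T', typing G t T -> sub G T T' -> typing G t T'
| T_Abs : forall G S t T, typing (BTyp S :: G) t (tshift 1 0 T) -> typing G (tabs S t) (TArr S T)
| T_App : forall G r s S T, typing G r (TArr S T) -> typing G s S -> typing G (tapp r s) T
| T_TAbs : forall G S t T, typing (BSub S :: G) t T -> typing G (ttabs S t) (TAllK S T)
| T_TApp : forall G t S T S', typing G t (TAllT S T) -> sub G S' S ->
    typing G (ttapp t S') (topen T S').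

(* Theta^*(T): promotion of a type variable to its (iterated) upper bound. *)
Fixpoint expose (G : ctx) (T : typ) : typ :=
  match T with
  | TVar n =>
      match G with
      | [] => T
      | b :: G' =>
          match n with
          | 0 => match b with
                 | BSub U => tshift 1 0 (expose G' U)
                 | BTyp _ => T
                 end
          | S m => tshift 1 0 (expose G' (TVar m))
          end
      end
  | _ => T
  end.

Inductive mtyping : ctx -> term -> typ -> Prop :=
| M_Var : forall G n U, nth_error G n = Some (BTyp U) -> mtyping G (tvar n) (tshift (S n) 0 U)
| M_Top : forall G, mtyping G ttop TTop
| M_Abs : forall G S t T, mtyping (BTyp S :: G) t (tshift 1 0 T) -> mtyping G (tabs S t) (TArr S T)
| M_App : forall G r s R S S' T, mtyping G r R -> mtyping G s S -> sub G S S' ->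
    expose G R = TArr S' T -> mtyping G (tapp r s) T
| M_TAbs : forall G S t T, mtyping (BSub S :: G) t T -> mtyping G (ttabs S t) (TAllK S T)
| M_TApp : forall G r R S S' T, mtyping G r R -> sub G S S' ->
    (expose G R = TAllK S' T \/ expose G R = TAllT S' T) ->
    mtyping G (ttapp r S) (topen T S).

(* Soundness: every minimal-typing rule is a derived typing rule, because
   R <: Theta^*(R) and forall^K (X <: S). T <: forall^Top (X <: S). T.
   Completeness, by induction on the typing derivation: subsumption is absorbed
   into the trailing subtyping, and the two elimination rules rely on inversion
   of subtyping at an exposed type: if A <: B and Theta^*(B) is an arrow
   (a quantifier), then so is Theta^*(A), with componentwise related domains
   and codomains (bodies).  In the abstraction case the minimal type of the
   body is well formed, so it does not mention the abstracted term variable and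
   can be moved out of its scope. *)

From Stdlib Require Import Arith List Lia.

Definition upren (xi : nat -> nat) (n : nat) : nat :=
  match n with 0 => 0 | S m => S (xi m) end.

Fixpoint ren (xi : nat -> nat) (T : typ) : typ :=
  match T with
  | TTop => TTop
  | TVar n => TVar (xi n)
  | TArr A B => TArr (ren xi A) (ren xi B)
  | TAllK A B => TAllK (ren xi A) (ren (upren xi) B)
  | TAllT A B => TAllT (ren xi A) (ren (upren xi) B)
  end.

Definition up (s : nat -> typ) (n : nat) : typ :=
  match n with 0 => TVar 0 | S m => ren S (s m) end.

Fixpoint inst (s : nat -> typ) (T : typ) : typ :=
  match T with
  | TTop => TTop
  | TVar n => s n
  | TArr A B => TArr (inst s A) (inst s B)
  | TAllK A B => TAllK (inst s A) (inst (up s) B)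
  | TAllT A B => TAllT (inst s A) (inst (up s) B)
  end.

Definition subst0 (S0 : typ) (n : nat) : typ :=
  match n with 0 => S0 | S m => TVar m end.

Lemma ren_ext : forall T xi zeta, (forall n, xi n = zeta n) -> ren xi T = ren zeta T.
Proof.
  induction T; intros xi zeta H; simpl; f_equal; auto;
    apply IHT2; intros [|n]; simpl; auto.
Qed.

Lemma inst_ext : forall T s t, (forall n, s n = t n) -> inst s T = inst t T.
Proof.
  induction T; intros s t H; simpl; f_equal; auto;
    apply IHT2; intros [|n]; simpl; auto; rewrite H; auto.
Qed.

Lemma ren_ren : forall T xi zeta, ren xi (ren zeta T) = ren (fun n => xi (zeta n)) T.
Proof.
  induction T; intros xi zeta; simpl; f_equal; auto;
    rewrite IHT2; apply ren_ext; intros [|n]; reflexivity.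
Qed.

Lemma inst_ren : forall T s xi, inst s (ren xi T) = inst (fun n => s (xi n)) T.
Proof.
  induction T; intros s xi; simpl; f_equal; auto;
    rewrite IHT2; apply inst_ext; intros [|n]; reflexivity.
Qed.

Lemma ren_inst : forall T s xi, ren xi (inst s T) = inst (fun n => ren xi (s n)) T.
Proof.
  induction T; intros s xi; simpl; f_equal; auto;
    rewrite IHT2; apply inst_ext; intros [|n]; simpl; auto;
    rewrite !ren_ren; apply ren_ext; reflexivity.
Qed.

Lemma inst_id : forall T s, (forall n, s n = TVar n) -> inst s T = T.
Proof.
  induction T; intros s H; simpl; [reflexivity | apply H | f_equal; auto ..];
    apply IHT2; intros [|n]; simpl; auto; rewrite H; reflexivity.
Qed.

Lemma inst_subst0_ren_S : forall T S0, inst (subst0 S0) (ren S T) = T.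
Proof. intros; rewrite inst_ren; apply inst_id; reflexivity. Qed.

Lemma tshift_ren : forall T d c,
  tshift d c T = ren (fun n => if c <=? n then n + d else n) T.
Proof.
  induction T; intros d c; simpl;
    [reflexivity | destruct (c <=? n); reflexivity | f_equal; auto ..];
    rewrite IHT2; apply ren_ext; intros [|n]; simpl; auto;
    destruct (c <=? n); reflexivity.
Qed.

Lemma tshift_one : forall T, tshift 1 0 T = ren S T.
Proof.
  intros T; rewrite tshift_ren; apply ren_ext; intros n; simpl; lia.
Qed.

Lemma tshift_succ : forall U n, tshift (S (S n)) 0 U = ren S (tshift (S n) 0 U).
Proof.
  intros U n; rewrite !tshift_ren, ren_ren; apply ren_ext; intros k; simpl; lia.
Qed.

Ltac destruct_nat_tests := repeat match goal with
  | |- context [Nat.leb ?a ?b] => destruct (Nat.leb_spec a b)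
  | |- context [Nat.ltb ?a ?b] => destruct (Nat.ltb_spec a b)
  | |- context [Nat.eqb ?a ?b] => destruct (Nat.eqb_spec a b)
  end.

Lemma tunshift_tshift : forall T c, tunshift c (tshift 1 c T) = T.
Proof.
  induction T; intros c; simpl; f_equal; auto.
  destruct_nat_tests; simpl; destruct_nat_tests; f_equal; lia.
Qed.

Lemma tunshift_tshift_comm : forall T c k, k <= c ->
  tunshift (S c) (tshift 1 k T) = tshift 1 k (tunshift c T).
Proof.
  induction T; intros c k Hk; simpl; try (f_equal; auto; apply IHT2; lia).
  destruct_nat_tests; simpl; destruct_nat_tests; simpl; destruct_nat_tests; f_equal; lia.
Qed.

Lemma tunshift_tsubst : forall T c s, tunshift c (tsubst c s T) =
  inst (fun n => if n <? c then TVar n else if n =? c then tunshift c s else TVar (n - 1)) T.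
Proof.
  induction T; intros c s; simpl; f_equal; auto.
  1: destruct_nat_tests; simpl; destruct_nat_tests; try reflexivity; f_equal; lia.
  all: rewrite IHT2; apply inst_ext; intros [|m]; simpl; [reflexivity |].
  all: destruct_nat_tests; simpl; try lia; try reflexivity.
  all: try (f_equal; lia).
  all: subst; rewrite tunshift_tshift_comm by lia; apply tshift_one.
Qed.

Lemma topen_inst : forall T S0, topen T S0 = inst (subst0 S0) T.
Proof.
  intros T S0; unfold topen; rewrite tunshift_tsubst; apply inst_ext.
  intros [|m]; simpl.
  - apply tunshift_tshift.
  - f_equal; lia.
Qed.

Lemma expose_not_var : forall G T, (forall n, T <> TVar n) -> expose G T = T.
Proof.
  intros G T H; destruct G, T; auto; exfalso; eapply H; eauto.
Qed.

Lemma expose_tshift : forall b G T,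
  expose (b :: G) (tshift 1 0 T) = tshift 1 0 (expose G T).
Proof.
  intros b G T; destruct T; simpl;
    try (rewrite (expose_not_var G); [reflexivity | intros; discriminate]).
  rewrite Nat.add_1_r; reflexivity.
Qed.

Lemma expose_var_bound : forall G n U, nth_error G n = Some (BSub U) ->
  expose G (TVar n) = expose G (tshift (S n) 0 U).
Proof.
  induction G as [|b G IH]; intros [|n] U H; simpl in H; try discriminate.
  - injection H as ->; rewrite expose_tshift; reflexivity.
  - change (expose (b :: G) (TVar (S n))) with (tshift 1 0 (expose G (TVar n))).
    rewrite (IH n U H), <- (expose_tshift b), tshift_one, <- tshift_succ.
    reflexivity.
Qed.

Lemma wf_ren : forall G T, wf_typ G T -> forall G' xi,
  (forall n U, nth_error G n = Some (BSub U) ->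
     exists U', nth_error G' (xi n) = Some (BSub U')) ->
  wf_typ G' (ren xi T).
Proof.
  induction 1; intros G' xi Hxi; simpl; try constructor; auto;
    try (destruct (Hxi _ _ H) as [U' HU']; econstructor; eauto);
    apply IHwf_typ2; intros [|n] U HU; simpl in *; eauto.
Qed.

Lemma wf_weaken : forall G T b, wf_typ G T -> wf_typ (b :: G) (ren S T).
Proof.
  intros G T b H; apply wf_ren with G; simpl; eauto.
Qed.

Lemma wf_inst : forall G T, wf_typ G T -> forall G' s,
  (forall n U, nth_error G n = Some (BSub U) -> wf_typ G' (s n)) ->
  wf_typ G' (inst s T).
Proof.
  induction 1; intros G' s Hs; simpl; try constructor; eauto;
    apply IHwf_typ2; intros [|n] U HU; simpl in *;
    [econstructor; reflexivity | apply wf_weaken; eauto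
    |econstructor; reflexivity | apply wf_weaken; eauto].
Qed.

Lemma wf_inst_id : forall G T, wf_typ G T -> forall s,
  (forall n U, nth_error G n = Some (BSub U) -> s n = TVar n) -> inst s T = T.
Proof.
  induction 1; intros s Hs; simpl; f_equal; eauto;
    apply IHwf_typ2; intros [|n] U HU; simpl in *; auto; erewrite Hs; eauto.
Qed.

Lemma wf_strengthen : forall G b T, wf_typ (b :: G) (ren S T) -> wf_typ G T.
Proof.
  intros G b T H; rewrite <- (inst_subst0_ren_S T TTop).
  apply wf_inst with (b :: G); auto.
  intros [|n] U HU; simpl in *; econstructor; eauto.
Qed.

(* A type well formed under a term binding does not mention index 0, so the
   junk value TTop that [subst0 TTop] puts there is never used. *)
Lemma wf_typ_binding_tshift : forall G S0 T, wf_typ (BTyp S0 :: G) T ->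
  T = tshift 1 0 (inst (subst0 TTop) T).
Proof.
  intros G S0 T H; rewrite tshift_one, ren_inst.
  symmetry; apply wf_inst_id with (1 := H).
  intros [|n] U HU; simpl in HU; [discriminate | reflexivity].
Qed.

Lemma wf_ctx_typ_lookup : forall G, wf_ctx G -> forall n U,
  nth_error G n = Some (BTyp U) -> wf_typ G (tshift (S n) 0 U).
Proof.
  induction 1; intros [|n] U Hn; simpl in Hn; try discriminate;
    try (injection Hn as ->; rewrite tshift_one);
    try rewrite tshift_succ; apply wf_weaken; auto.
Qed.

Lemma wf_expose : forall G, wf_ctx G -> forall T, wf_typ G T -> wf_typ G (expose G T).
Proof.
  induction G as [|b G IH]; intros HG T HT; [destruct T; exact HT |].
  destruct T as [|[|m]| | |]; simpl; try exact HT.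
  - destruct b as [U|U]; [| exact HT].
    inversion HG; subst; rewrite tshift_one; apply wf_weaken; auto.
  - rewrite tshift_one; apply wf_weaken, IH; [inversion HG; auto |].
    inversion HT; subst; econstructor; eauto.
Qed.

Definition ren_preserves_bounds (G G' : ctx) (xi : nat -> nat) : Prop :=
  forall n U, nth_error G n = Some (BSub U) ->
  exists U', nth_error G' (xi n) = Some (BSub U') /\
             ren xi (tshift (S n) 0 U) = tshift (S (xi n)) 0 U'.

Lemma ren_preserves_bounds_up : forall G G' xi S0,
  ren_preserves_bounds G G' xi ->
  ren_preserves_bounds (BSub S0 :: G) (BSub (ren xi S0) :: G') (upren xi).
Proof.
  intros G G' xi S0 Hxi [|n] U HU; simpl in HU.
  - injection HU as ->; exists (ren xi U); split; [reflexivity |].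
    simpl; rewrite !tshift_one, !ren_ren; reflexivity.
  - destruct (Hxi _ _ HU) as [U' [H1 H2]]; exists U'; split; [exact H1 |].
    simpl; rewrite !tshift_succ, ren_ren, <- H2, ren_ren; reflexivity.
Qed.

Lemma sub_ren : forall G A B, sub G A B -> forall G' xi,
  ren_preserves_bounds G G' xi -> sub G' (ren xi A) (ren xi B).
Proof.
  induction 1; intros G' xi Hxi; simpl.
  - destruct (Hxi _ _ H) as [U' [H1 ->]]; apply S_Var; auto.
  - apply S_Top.
  - apply S_Refl.
  - eapply S_Trans; eauto.
  - apply S_Arr; auto.
  - apply S_AllFun, IHsub, ren_preserves_bounds_up; auto.
  - apply S_AllLoc; auto; apply IHsub2, ren_preserves_bounds_up; auto.
  - apply S_AllTop; auto.
    apply (IHsub2 (BSub TTop :: G')), (ren_preserves_bounds_up G G' xi TTop); auto.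
Qed.

Lemma sub_weaken : forall G A B b, sub G A B -> sub (b :: G) (ren S A) (ren S B).
Proof.
  intros G A B b H; apply sub_ren with G; auto.
  intros n U HU; exists U; split; [exact HU | symmetry; apply tshift_succ].
Qed.

Definition inst_preserves_bounds (G G' : ctx) (s : nat -> typ) : Prop :=
  forall n U, nth_error G n = Some (BSub U) -> sub G' (s n) (inst s (tshift (S n) 0 U)).

Lemma inst_preserves_bounds_up : forall G G' s S0,
  inst_preserves_bounds G G' s ->
  inst_preserves_bounds (BSub S0 :: G) (BSub (inst s S0) :: G') (up s).
Proof.
  intros G G' s S0 Hs [|n] U HU; simpl in HU.
  - injection HU as ->; simpl.
    replace (inst (up s) (tshift 1 0 U)) with (tshift 1 0 (inst s U))
      by (rewrite !tshift_one, inst_ren, ren_inst; reflexivity).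
    apply S_Var; reflexivity.
  - simpl; rewrite tshift_succ, inst_ren.
    replace (inst (fun k => up s (S k)) (tshift (S n) 0 U))
      with (ren S (inst s (tshift (S n) 0 U))) by apply ren_inst.
    apply sub_weaken; auto.
Qed.

Lemma sub_inst : forall G A B, sub G A B -> forall G' s,
  inst_preserves_bounds G G' s -> sub G' (inst s A) (inst s B).
Proof.
  induction 1; intros G' s Hs; simpl.
  - apply Hs; auto.
  - apply S_Top.
  - apply S_Refl.
  - eapply S_Trans; eauto.
  - apply S_Arr; auto.
  - apply S_AllFun, IHsub, inst_preserves_bounds_up; auto.
  - apply S_AllLoc; auto; apply IHsub2, inst_preserves_bounds_up; auto.
  - apply S_AllTop; auto.
    apply (IHsub2 (BSub TTop :: G')), (inst_preserves_bounds_up G G' s TTop); auto.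
Qed.

Lemma topen_sub : forall G U A B S', sub (BSub U :: G) A B -> sub G S' U ->
  sub G (topen A S') (topen B S').
Proof.
  intros G U A B S' H HS; rewrite !topen_inst.
  apply sub_inst with (1 := H).
  intros [|n] U0 HU; simpl in HU.
  - injection HU as ->; simpl; rewrite tshift_one, inst_subst0_ren_S; exact HS.
  - simpl; rewrite tshift_succ, inst_subst0_ren_S; apply S_Var; auto.
Qed.

Lemma sub_strengthen_typ_binding : forall G S0 A B,
  sub (BTyp S0 :: G) (tshift 1 0 A) (tshift 1 0 B) -> sub G A B.
Proof.
  intros G S0 A B H.
  rewrite <- (inst_subst0_ren_S A TTop), <- (inst_subst0_ren_S B TTop), <- !tshift_one.
  apply sub_inst with (1 := H).
  intros [|n] U HU; simpl in HU; [discriminate |].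
  simpl; rewrite tshift_succ, inst_subst0_ren_S; apply S_Var; auto.
Qed.

Lemma sub_expose : forall G T, sub G T (expose G T).
Proof.
  induction G as [|b G IH]; intros T; [destruct T; apply S_Refl |].
  destruct T as [|[|m]| | |]; simpl; try apply S_Refl.
  - destruct b as [U|U]; [| apply S_Refl].
    eapply S_Trans; [apply S_Var with (n := 0); reflexivity |].
    rewrite !tshift_one; apply sub_weaken, IH.
  - rewrite tshift_one; apply (sub_weaken G (TVar m)), IH.
Qed.

Lemma sub_expose_arr : forall G A B, sub G A B -> forall S0 T0,
  expose G B = TArr S0 T0 ->
  exists S1 T1, expose G A = TArr S1 T1 /\ sub G S0 S1 /\ sub G T1 T0.
Proof.
  induction 1; intros Sx Tx HE;
    try (rewrite expose_not_var in HE by (intros; discriminate); discriminate).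
  - rewrite (expose_var_bound _ _ _ H); exists Sx, Tx; repeat split; auto; apply S_Refl.
  - exists Sx, Tx; repeat split; auto; apply S_Refl.
  - destruct (IHsub2 _ _ HE) as [S1 [T1 [E1 [HS1 HT1]]]].
    destruct (IHsub1 _ _ E1) as [S2 [T2 [E2 [HS2 HT2]]]].
    exists S2, T2; repeat split; auto; eapply S_Trans; eauto.
  - rewrite expose_not_var in HE by (intros; discriminate); injection HE as -> ->.
    exists S, T; rewrite expose_not_var by (intros; discriminate); auto.
Qed.

(* The bodies are compared only after instantiation by some S' <: S0, since
   forall-Top relates bodies under the bound Top rather than under S0. *)
Lemma sub_expose_all : forall G A B, sub G A B -> forall S0 T0,
  (expose G B = TAllK S0 T0 \/ expose G B = TAllT S0 T0) ->
  exists S1 T1, (expose G A = TAllK S1 T1 \/ expose G A = TAllT S1 T1) /\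
    sub G S0 S1 /\ (forall S', sub G S' S0 -> sub G (topen T1 S') (topen T0 S')).
Proof.
  induction 1; intros Sx Tx HE;
    try (rewrite expose_not_var in HE by (intros; discriminate);
         destruct HE as [HE|HE]; discriminate).
  - rewrite (expose_var_bound _ _ _ H).
    exists Sx, Tx; repeat split; auto; intros; apply S_Refl.
  - exists Sx, Tx; repeat split; auto; intros; apply S_Refl.
  - destruct (IHsub2 _ _ HE) as [S1 [T1 [E1 [HS1 HT1]]]].
    destruct (IHsub1 _ _ E1) as [S2 [T2 [E2 [HS2 HT2]]]].
    exists S2, T2; repeat split; auto; [eapply S_Trans; eauto |].
    intros S' HS'; eapply S_Trans; [apply HT2; eapply S_Trans |]; eauto.
  - rewrite expose_not_var in HE by (intros; discriminate).
    destruct HE as [HE|HE]; inversion HE; subst.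
    exists Sx, T; rewrite expose_not_var by (intros; discriminate).
    repeat split; auto; [apply S_Refl | intros; eapply topen_sub; eauto].
  - rewrite expose_not_var in HE by (intros; discriminate).
    destruct HE as [HE|HE]; inversion HE; subst.
    exists S0, S1; rewrite expose_not_var by (intros; discriminate).
    repeat split; auto; intros; eapply topen_sub; [| eapply S_Trans]; eauto.
  - rewrite expose_not_var in HE by (intros; discriminate).
    destruct HE as [HE|HE]; inversion HE; subst.
    exists S0, S1; rewrite expose_not_var by (intros; discriminate).
    repeat split; auto; intros; eapply topen_sub; [| apply S_Top]; eauto.
Qed.

Lemma mtyping_wf : forall G t S0, mtyping G t S0 ->
  wf_ctx G -> wf_term G t -> wf_typ G S0.
Proof.
  induction 1; intros HG Ht; inversion Ht; subst.
  - apply wf_ctx_typ_lookup; auto.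
  - constructor.
  - constructor; auto; apply wf_strengthen with (BTyp S).
    rewrite <- tshift_one; apply IHmtyping; auto; constructor; auto.
  - assert (W : wf_typ G (expose G R)) by (apply wf_expose; auto).
    rewrite H2 in W; inversion W; auto.
  - constructor; auto; apply IHmtyping; auto; constructor; auto.
  - assert (W : wf_typ G (expose G R)) by (apply wf_expose; auto).
    assert (WT : wf_typ (BSub S' :: G) T)
      by (destruct H1 as [E|E]; rewrite E in W; inversion W; auto).
    rewrite topen_inst; apply wf_inst with (1 := WT).
    intros [|n] U HU; simpl in *; eauto; econstructor; eauto.
Qed.

Lemma mtyping_typing : forall G t S0, mtyping G t S0 -> typing G t S0.
Proof.
  induction 1.
  - apply T_Var; auto.
  - apply T_Top.
  - apply T_Abs; auto.
  - apply T_App with S'.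
    + eapply T_Sub; [exact IHmtyping1 |]; rewrite <- H2; apply sub_expose.
    + eapply T_Sub; eauto.
  - apply T_TAbs; auto.
  - eapply T_TApp; [| exact H0].
    eapply T_Sub; [exact IHmtyping |]; eapply S_Trans; [apply sub_expose |].
    destruct H1 as [-> | ->]; [apply S_AllLoc |]; apply S_Refl.
Qed.

Lemma typing_mtyping : forall G t T, typing G t T -> wf_ctx G -> wf_term G t ->
  exists S0, mtyping G t S0 /\ sub G S0 T.
Proof.
  induction 1; intros HG Ht.
  - exists TTop; split; [constructor | apply S_Refl].
  - exists (tshift (S n) 0 U); split; [constructor; auto | apply S_Refl].
  - destruct IHtyping as [S0 [Hm Hsub]]; auto.
    exists S0; split; [| eapply S_Trans]; eauto.
  - inversion Ht; subst.
    assert (HG' : wf_ctx (BTyp S :: G)) by (constructor; auto).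
    destruct IHtyping as [S0 [Hm Hsub]]; auto.
    assert (W : wf_typ (BTyp S :: G) S0) by (eapply mtyping_wf; eauto).
    rewrite (wf_typ_binding_tshift G S S0 W) in Hm, Hsub.
    exists (TArr S (inst (subst0 TTop) S0)); split.
    + apply M_Abs; auto.
    + apply S_Arr; [apply S_Refl | eapply sub_strengthen_typ_binding; eauto].
  - inversion Ht; subst.
    destruct IHtyping1 as [R [Hm Hsub]]; auto.
    destruct IHtyping2 as [S2 [Hm2 Hsub2]]; auto.
    destruct (sub_expose_arr _ _ _ Hsub S T) as [S1 [T1 [E [HS HT]]]];
      [apply expose_not_var; discriminate |].
    exists T1; split; auto.
    apply M_App with R S2 S1; auto; eapply S_Trans; eauto.
  - inversion Ht; subst.
    destruct IHtyping as [S0 [Hm Hsub]]; [constructor; auto | auto |].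
    exists (TAllK S S0); split; [constructor | apply S_AllFun]; auto.
  - inversion Ht; subst.
    destruct IHtyping as [R [Hm Hsub]]; auto.
    destruct (sub_expose_all _ _ _ Hsub S T) as [S1 [T1 [E [HS HT]]]];
      [right; apply expose_not_var; discriminate |].
    exists (topen T1 S'); split; auto.
    apply M_TApp with R S1; auto; eapply S_Trans; eauto.
Qed.

Theorem proposition6p4 : forall (G : ctx) (t : term) (T : typ),
  wf_ctx G -> wf_term G t -> wf_typ G T ->
  (typing G t T <-> exists S, mtyping G t S /\ sub G S T).
Proof.
  intros G t T HG Ht _; split.
  - intros H; apply typing_mtyping; auto.
  - intros [S0 [Hm Hsub]]; eapply T_Sub; [apply mtyping_typing |]; eauto.
Qed.
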